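(* Let $(\preceq_s)_{s\in S}$ be a finite family of WQOs on a set $X$ and let $\preceq$ be its conjunction ($x\preceq y$ iff $x\preceq_s y$ for all $s\in S$). Then $I\subseteq X$ is an ideal of $(X,\preceq)$ if and only if $I=\bigcap_{s\in S}I_s$, where each $I_s$ is an ideal of $(X,\preceq_s)$ and $(I_s)_{s\in S}\in\mathrm{Adh}_S(I)$.
   Context: An ideal of a WQO is a nonempty, downward closed, directed subset (directed: any two elements have a common upper bound in the set). For $L\subseteq X$, $\mathrm{Adh}_S(L)$ is the set of families $(I_s)_{s\in S}$ of ideals ($I_s$ an ideal of $\preceq_s$) for which there is a $\preceq$-directed set $D\subseteq L$ with $I_s=\downarrow_{\preceq_s}D$ for every $s\in S$. *)

From mathcomp Require Import all_boot.
Set Implicit Arguments. Unset Strict Implicit. Unset Printing Implicit Defensive.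

Definition wqo (X : Type) (R : X -> X -> Prop) : Prop :=
  (forall x, R x x) /\
  (forall x y z, R x y -> R y z -> R x z) /\
  (forall f : nat -> X, exists i j : nat, (i < j)%N /\ R (f i) (f j)).

Definition conj_rel (S X : Type) (le : S -> X -> X -> Prop) : X -> X -> Prop :=
  fun x y => forall s, le s x y.

Definition downward_closed (X : Type) (R : X -> X -> Prop) (A : X -> Prop) : Prop :=
  forall x y, A y -> R x y -> A x.

Definition directed (X : Type) (R : X -> X -> Prop) (D : X -> Prop) : Prop :=
  (exists x, D x) /\
  (forall x y, D x -> D y -> exists z, D z /\ R x z /\ R y z).

Definition ideal (X : Type) (R : X -> X -> Prop) (I : X -> Prop) : Prop :=
  (exists x, I x) /\ downward_closed R I /\ directed R I.

Definition down (X : Type) (R : X -> X -> Prop) (D : X -> Prop) : X -> Prop :=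
  fun x => exists y, D y /\ R x y.

Definition Adh (S X : Type) (le : S -> X -> X -> Prop) (L : X -> Prop)
    (Is : S -> X -> Prop) : Prop :=
  (forall s, ideal (le s) (Is s)) /\
  exists D : X -> Prop,
    directed (conj_rel le) D /\ (forall x, D x -> L x) /\
    (forall s x, Is s x <-> down (le s) D x).

From mathcomp Require Import all_boot.

Set Implicit Arguments.
Unset Strict Implicit.

(* The well-quasi-order hypothesis enters only through reflexivity and
   transitivity; what matters is that S is finite. For a ⪯-ideal I, the ⪯_s-downsets of I are ⪯_s-ideals whose
   intersection is I: an element lying below some element of I in each coordinate
   lies below a single element of I, obtained by finitely many applications of
   directedness. Conversely, if D is ⪯-directed, the same finite argument shows
   that ⋂_s ↓_{⪯_s} D is directed, hence a ⪯-ideal. *)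

Lemma ideal_ext (X : Type) (R : X -> X -> Prop) (A B : X -> Prop) :
  ideal R A -> (forall x, A x <-> B x) -> ideal R B.
Proof.
move=> [[x Ax] [dcA [_ dirA]]] AB.
have Bx : B x by apply/AB.
split; first by exists x.
split; first by move=> y z /AB Az yz; apply/AB; apply: dcA yz.
split; first by exists x.
move=> y z /AB Ay /AB Az; have [w [Aw yzw]] := dirA y z Ay Az.
by exists w; split => //; apply/AB.
Qed.

Lemma down_directed_ideal (X : Type) (R R' : X -> X -> Prop) (D : X -> Prop) :
  (forall x, R x x) -> (forall x y z, R x y -> R y z -> R x z) ->
  (forall x y, R' x y -> R x y) ->
  directed R' D -> ideal R (down R D).
Proof.
move=> Rrefl Rtrans sub_R'R [[d Dd] dirD].
have downD : down R D d by exists d.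
split; first by exists d.
split; first by move=> x y [z [Dz yz]] xy; exists z; split => //; apply: Rtrans xy yz.
split; first by exists d.
move=> x y [u [Du xu]] [v [Dv yv]].
have [w [Dw [/sub_R'R uw /sub_R'R vw]]] := dirD u v Du Dv.
exists w; split; first by exists w.
by split; [apply: Rtrans xu uw | apply: Rtrans yv vw].
Qed.

Section FiniteConjunction.

Variables (S : finType) (X : Type) (le : S -> X -> X -> Prop).
Hypothesis le_refl : forall s x, le s x x.
Hypothesis le_trans : forall s x y z, le s x y -> le s y z -> le s x z.

Lemma directed_conj_common_bound (D : X -> Prop) (Q : S -> X -> Prop) :
  directed (conj_rel le) D ->
  (forall s y z, Q s y -> conj_rel le y z -> Q s z) ->
  (forall s, exists y, D y /\ Q s y) ->
  exists z, D z /\ forall s, Q s z.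
Proof.
move=> [[d Dd] dirD] Qup Qex.
suff [z [Dz Qz]] : exists z, D z /\ forall s, s \in enum S -> Q s z.
  by exists z; split=> // s; apply: Qz; rewrite mem_enum.
elim: (enum S) => [|a l [z [Dz Qz]]]; first by exists d.
have [y [Dy Qy]] := Qex a.
have [w [Dw [zw yw]]] := dirD z y Dz Dy.
exists w; split=> // s; rewrite in_cons => /orP [/eqP -> | sl].
  exact: Qup Qy yw.
exact: Qup (Qz s sl) zw.
Qed.

Lemma bigcap_down_directed_ideal (D : X -> Prop) :
  directed (conj_rel le) D ->
  ideal (conj_rel le) (fun x => forall s, down (le s) D x).
Proof.
move=> dirD; have [[d Dd] _] := dirD.
have downD : forall s, down (le s) D d by move=> s; exists d.
split; first by exists d.
split.
  move=> x y downDy xy s; have [z [Dz yz]] := downDy s.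
  by exists z; split => //; apply: le_trans (xy s) yz.
split; first by exists d.
move=> x y downDx downDy.
pose Q s z := le s x z /\ le s y z.
have Qup : forall s u v, Q s u -> conj_rel le u v -> Q s v.
  by move=> s u v [xu yu] uv; split; [apply: le_trans xu (uv s) | apply: le_trans yu (uv s)].
have Qex : forall s, exists z, D z /\ Q s z.
  move=> s; have [u [Du xu]] := downDx s; have [v [Dv yv]] := downDy s.
  have [w [Dw [uw vw]]] := dirD.2 u v Du Dv.
  by exists w; split => //; split; [apply: le_trans xu (uw s) | apply: le_trans yv (vw s)].
have [z [Dz Qz]] := directed_conj_common_bound dirD Qup Qex.
by exists z; split; [move=> s; exists z | split=> s; case: (Qz s)].
Qed.

Lemma conj_ideal_eq_bigcap_down (I : X -> Prop) :
  ideal (conj_rel le) I -> forall x, I x <-> (forall s, down (le s) I x).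
Proof.
move=> [_ [dcI dirI]] x; split; first by move=> Ix s; exists x.
move=> downIx.
have [z [Iz xz]] := directed_conj_common_bound (Q := fun s z => le s x z) dirI
  (fun s y z xy yz => le_trans xy (yz s)) downIx.
exact: dcI Iz xz.
Qed.

End FiniteConjunction.

Theorem mainTheorem10 (S : finType) (X : Type) (le : S -> X -> X -> Prop)
    (Hwqo : forall s, wqo (le s)) (I : X -> Prop) :
  ideal (conj_rel le) I <->
  exists Is : S -> X -> Prop,
    (forall s, ideal (le s) (Is s)) /\
    Adh le I Is /\
    (forall x, I x <-> (forall s, Is s x)).
Proof.
have le_refl s : forall x, le s x x by case: (Hwqo s).
have le_trans s : forall x y z, le s x y -> le s y z -> le s x z
  by case: (Hwqo s) => _ [].
split.
- move=> idI; have [_ [_ dirI]] := idI.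
  have ideal_down s : ideal (le s) (down (le s) I).
    exact: down_directed_ideal (le_refl s) (le_trans s) (fun x y xy => xy s) dirI.
  exists (fun s => down (le s) I); split => //; split.
    by split => //; exists I.
  exact: conj_ideal_eq_bigcap_down le_refl le_trans I idI.
- move=> [Is [_ [[_ [D [dirD [_ IsD]]]] IIs]]].
  apply: (ideal_ext (bigcap_down_directed_ideal le_refl le_trans dirD)) => x.
  by split=> [downDx | /IIs Isx s]; [apply/IIs => s; apply/IsD | apply/IsD].
Qed.
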